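(* Let $k$ be a binary kernel on a non-empty set $\mathcal X$ such that the quotient set $\mathcal Q_k=\mathcal X_{\mathrm{ref}}/\!\sim_k$ is finite, say $\mathcal Q_k=\{Q_1,\dots,Q_d\}$. Define $\phi:\mathcal X\to\{0,1\}^d$ by $\phi(x)_i=1$ if $x\in\mathcal X_{\mathrm{ref}}$ and $Q_i=[x]_k$, and $\phi(x)_i=0$ otherwise. Then $\phi$ is a feature map of $k$, i.e. $k(x,y)=\langle\phi(x),\phi(y)\rangle$ for all $x,y\in\mathcal X$.
   Context: A kernel on $\mathcal X$ is a symmetric positive semidefinite function $k:\mathcal X\times\mathcal X\to\mathbb R$. A kernel $k$ is binary if $k(x,y)\in\{0,1\}$ for all $x,y$. The relation induced by $k$ is $\sim_k=\{(x,y): k(x,y)=1\}$. Let $\mathcal X_{\mathrm{ref}}=\{x\in\mathcal X: x\sim_k x\}$; on $\mathcal X_{\mathrm{ref}}$ the relation $\sim_k$ is an equivalence relation, $[x]_k$ denotes the equivalence class of $x\in\mathcal X_{\mathrm{ref}}$, and $\mathcal Q_k$ is the set of equivalence classes. *)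

From mathcomp Require Import all_boot all_order all_algebra.
From mathcomp Require Import boolp classical_sets reals.
Set Implicit Arguments. Unset Strict Implicit. Unset Printing Implicit Defensive.
Import Order.TTheory GRing.Theory Num.Theory.
Local Open Scope ring_scope.
Local Open Scope classical_set_scope.

Section Kernels.
Variables (R : realType) (X : Type).

Definition kernel_symmetric (k : X -> X -> R) : Prop :=
  forall x y, k x y = k y x.

Definition kernel_psd (k : X -> X -> R) : Prop :=
  forall (n : nat) (c : 'I_n -> R) (x : 'I_n -> X),
    0 <= \sum_(i < n) \sum_(j < n) c i * c j * k (x i) (x j).

Definition is_kernel (k : X -> X -> R) : Prop :=
  kernel_symmetric k /\ kernel_psd k.

Definition binary_kernel (k : X -> X -> R) : Prop :=
  is_kernel k /\ forall x y, k x y = 0 \/ k x y = 1.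

Definition krel (k : X -> X -> R) (x y : X) : Prop := k x y = 1.

Definition Xref (k : X -> X -> R) : set X := [set x | krel k x x].

(* equivalence class [x]_k (meaningful for x in X_ref) *)
Definition eqclass (k : X -> X -> R) (x : X) : set X := [set y | krel k x y].

Definition quotient_set (k : X -> X -> R) : set (set X) :=
  [set C | exists2 x, Xref k x & C = eqclass k x].

Definition phi (k : X -> X -> R) (d : nat) (Q : 'I_d -> set X)
  (x : X) (i : 'I_d) : R :=
  if `[< Xref k x /\ Q i = eqclass k x >] then 1 else 0.

End Kernels.

(** The relation [k x y = 1] is an equivalence on [Xref k]: testing positive
semidefiniteness against the vectors (1,-1) and (1,-1,1) shows, for a 0/1-valued
kernel, that [k x y = 1] forces [k x x = k y y = 1] and that it is transitive.
Hence [phi k Q x] is the indicator of the index of the class of [x] (and [0]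
off [Xref k]), and the inner product of [phi k Q x] and [phi k Q y] is [1]
exactly when [y] lies in the class of [x]. *)

From mathcomp Require Import all_boot all_order all_algebra.
From mathcomp Require Import boolp classical_sets reals.
From mathcomp Require Import lra.
Import Order.TTheory GRing.Theory Num.Theory.
Local Open Scope ring_scope.
Local Open Scope classical_set_scope.

Section PsdKernel.
Context {R : realType} {X : Type} {k : X -> X -> R}.
Hypothesis k_psd : kernel_psd k.

Lemma kernel_psd3 (a b c : R) (x y z : X) :
  0 <= a * a * k x x + a * b * k x y + a * c * k x z
     + b * a * k y x + b * b * k y y + b * c * k y z
     + c * a * k z x + c * b * k z y + c * c * k z z.
Proof.
have := k_psd 3 (fun i => nth 0 [:: a; b; c] i) (fun i => nth x [:: x; y; z] i).
by rewrite !big_ord_recr !big_ord0 /= !add0r !addrA.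
Qed.

End PsdKernel.

Section BinaryKernel.
Context {R : realType} {X : Type} {k : X -> X -> R}.

Lemma eqclass_eq_krel {x y} : Xref k y -> eqclass k x = eqclass k y -> krel k x y.
Proof. by move=> yref Exy; have : eqclass k y y by []; rewrite -Exy. Qed.

Hypothesis hk : binary_kernel k.

Lemma krel_Xref {x y} : krel k x y -> Xref k x /\ Xref k y.
Proof.
case: hk => [[k_sym k_psd] k01]; rewrite /Xref /krel /= => kxy.
have := kernel_psd3 k_psd 1 (-1) 0 x y x; rewrite (k_sym y x) kxy.
by case: (k01 x x) => ->; case: (k01 y y) => ->; lra.
Qed.

Lemma kernel_eq0_notXref x y : ~ Xref k x -> k x y = 0.
Proof.
case: hk => [_ k01] xNref; case: (k01 x y) => // kxy.
by case: xNref; case: (krel_Xref kxy).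
Qed.

Lemma krel_sym {x y} : krel k x y -> krel k y x.
Proof. by case: hk => [[k_sym _] _]; rewrite /krel k_sym. Qed.

Lemma krel_trans {x y z} : krel k x y -> krel k y z -> krel k x z.
Proof.
case: hk => [[k_sym k_psd] k01] kxy kyz.
have [[kxx kyy] [_ kzz]] := (krel_Xref kxy, krel_Xref kyz).
rewrite /krel /Xref /= in kxy kyz kxx kyy kzz *.
have := kernel_psd3 k_psd 1 (-1) 1 x y z.
rewrite (k_sym y x) (k_sym z y) (k_sym z x) kxy kyz kxx kyy kzz.
by case: (k01 x z) => ->; lra.
Qed.

Lemma eqclass_krel {x y} : krel k x y -> eqclass k x = eqclass k y.
Proof.
move=> kxy; apply/seteqP; split=> z /=; rewrite /eqclass /=.
  exact/krel_trans/krel_sym.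
exact: krel_trans.
Qed.

End BinaryKernel.

Section FeatureMap.
Context {R : realType} {X : Type} {k : X -> X -> R} {d : nat} {Q : 'I_d -> set X}.

Lemma phi_notXref x i : ~ Xref k x -> phi k Q x i = 0.
Proof. by move=> xNref; rewrite /phi; case: asboolP => // -[]. Qed.

Hypothesis hk : binary_kernel k.

Lemma phi_class {x i} :
  Xref k x -> Q i = eqclass k x -> forall y, phi k Q y i = k x y.
Proof.
case: hk => [_ k01] xref Qi y; rewrite /phi; case: asboolP => [[yref Qiy]|Nyi].
  by apply/esym/(eqclass_eq_krel yref); rewrite -Qi.
case: (k01 x y) => // kxy; case: Nyi; split; first by case: (krel_Xref hk kxy).
by rewrite Qi (eqclass_krel hk kxy).
Qed.

Hypothesis Qinj : injective Q.

Lemma phi_indicator {x i} :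
  Xref k x -> Q i = eqclass k x -> forall j, phi k Q x j = (j == i)%:R.
Proof.
move=> xref Qi j; have [->|Nji] := eqVneq j i; first by rewrite (phi_class xref Qi).
rewrite /phi; case: asboolP => // -[_ Qj].
by move/eqP: Nji; case; apply: Qinj; rewrite Qi Qj.
Qed.

End FeatureMap.

Theorem proposition3 (R : realType) (X : Type) (X_ne : inhabited X)
  (k : X -> X -> R) (hk : binary_kernel k)
  (d : nat) (Q : 'I_d -> set X) (Qinj : injective Q)
  (Qenum : range Q = quotient_set k) :
  forall x y : X, k x y = \sum_(i < d) phi k Q x i * phi k Q y i.
Proof.
move=> x y; have [xref|xNref] := pselect (Xref k x); last first.
  by rewrite kernel_eq0_notXref // big1 // => i _; rewrite phi_notXref ?mul0r.
have : quotient_set k (eqclass k x) by exists x.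
rewrite -Qenum => -[i _ Qi].
have phix := phi_indicator hk Qinj xref Qi.
rewrite (bigD1 i) //= big1 => [|j Nji]; last by rewrite phix (negbTE Nji) mul0r.
by rewrite phix eqxx mul1r addr0 (phi_class hk xref Qi).
Qed.
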